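(* Let $(X,\preceq,\{H_n\})$ be a half-space order and let a group $G$ act on $X$ by quasi-automorphisms of defect bounded by $d$. For $a\in X$ define $f_a:G\to\mathbb{Z}$ by $f_a(g):=h(ga,a)$. Then each $f_a$ is a quasimorphism of defect at most $d$, and $|f_a(g)-f_b(g)|\leq d$ for all $a,b\in X$ and $g\in G$.
   Context: A half-space filtration of a set $X$ is a family $\{H_n\}_{n\in\mathbb{Z}}$ of subsets with $H_{n+1}\subsetneq H_n$, $\bigcap H_n=\emptyset$, $\bigcup H_n=X$. The height of $a\in X$ is $h(a)=\sup\{n\in\mathbb{Z}: a\in H_n\}$, and $h(a,b)=h(a)-h(b)$. $(X,\preceq,\{H_n\})$ is a half-space order if $(X,\preceq)$ is a poset, $\{H_n\}$ is a half-space filtration, and for some constant $w$, $h(a,b)\geq w\Rightarrow a\succeq b$. A group acting on $X$ (by bijections, not necessarily order-preserving) acts by quasi-automorphisms of defect bounded by $d$ if $|h(ga,gb)-h(a,b)|\leq d$ for all $g\in G$, $a,b\in X$. The defect of $f:G\to\mathbb{R}$ is $\sup_{g,k}|f(gk)-f(g)-f(k)|$. *)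

From Stdlib Require Import ZArith Reals Lra ClassicalEpsilon.
Set Implicit Arguments.
Open Scope Z_scope.

Definition half_space_filtration (X : Type) (H : Z -> X -> Prop) : Prop :=
  (forall n : Z, (forall x, H (n + 1) x -> H n x) /\ exists x, H n x /\ ~ H (n + 1) x) /\
  (forall x : X, ~ (forall n : Z, H n x)) /\
  (forall x : X, exists n : Z, H n x).

Definition is_height (X : Type) (H : Z -> X -> Prop) (a : X) (n : Z) : Prop :=
  H n a /\ forall m : Z, H m a -> m <= n.

(* h(a) = sup {n in Z | a in H_n} (well defined for a half-space filtration;
   an arbitrary integer otherwise). *)
Definition height (X : Type) (H : Z -> X -> Prop) (a : X) : Z :=
  epsilon (inhabits 0%Z) (fun n => is_height H a n).

Definition rel_height (X : Type) (H : Z -> X -> Prop) (a b : X) : Z :=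
  height H a - height H b.

Definition is_poset (X : Type) (le : X -> X -> Prop) : Prop :=
  (forall a, le a a) /\ (forall a b, le a b -> le b a -> a = b) /\
  (forall a b c, le a b -> le b c -> le a c).

Definition half_space_order (X : Type) (le : X -> X -> Prop) (H : Z -> X -> Prop) : Prop :=
  is_poset le /\ half_space_filtration H /\
  exists w : Z, forall a b : X, rel_height H a b >= w -> le b a.

Definition is_group (G : Type) (mul : G -> G -> G) (one : G) (inv : G -> G) : Prop :=
  (forall x y z, mul x (mul y z) = mul (mul x y) z) /\
  (forall x, mul one x = x) /\ (forall x, mul x one = x) /\
  (forall x, mul (inv x) x = one) /\ (forall x, mul x (inv x) = one).

Definition is_action (G X : Type) (mul : G -> G -> G) (one : G) (act : G -> X -> X) : Prop :=
  (forall x, act one x = x) /\ (forall g k x, act (mul g k) x = act g (act k x)) /\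
  (forall g, (forall x y, act g x = act g y -> x = y) /\ (forall y, exists x, act g x = y)).

Definition quasi_aut_action (G X : Type) (H : Z -> X -> Prop) (act : G -> X -> X) (d : R) : Prop :=
  forall g a b, (Rabs (IZR (rel_height H (act g a) (act g b)) - IZR (rel_height H a b)) <= d)%R.

Definition quasimorphism_defect_le (G : Type) (mul : G -> G -> G) (f : G -> Z) (d : R) : Prop :=
  forall g k, (Rabs (IZR (f (mul g k) - f g - f k)) <= d)%R.

(* Relative height is a coboundary: h(x, y) = h(x) - h(y).  Hence both the
   defect f_a(gk) - f_a(g) - f_a(k) and the difference f_a(g) - f_b(g)
   rearrange into h(gx, gy) - h(x, y) for a suitable pair (x, y), which the
   quasi-automorphism hypothesis bounds by d. *)
From Stdlib Require Import ZArith Reals.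
Set Implicit Arguments.

Section RelativeHeight.

Variables (X : Type) (H : Z -> X -> Prop).

Lemma rel_height_trans (a b c : X) :
  rel_height H a c = rel_height H a b + rel_height H b c.
Proof. unfold rel_height; ring. Qed.

Lemma rel_height_sub_exchange (a a' b b' : X) :
  rel_height H a a' - rel_height H b b' = rel_height H a b - rel_height H a' b'.
Proof. unfold rel_height; ring. Qed.

End RelativeHeight.

Section OrbitHeight.

Variables (X G : Type) (H : Z -> X -> Prop) (mul : G -> G -> G) (act : G -> X -> X).

Lemma orbit_height_defect (g k : G) (a : X) :
  act (mul g k) a = act g (act k a) ->
  rel_height H (act (mul g k) a) a - rel_height H (act g a) a - rel_height H (act k a) a
  = rel_height H (act g (act k a)) (act g a) - rel_height H (act k a) a.
Proof.
  intros ->.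
  rewrite (rel_height_trans H _ (act g a) a); ring.
Qed.

Lemma quasi_aut_rel_height_bound (d : R) :
  quasi_aut_action H act d -> forall (g : G) (x y : X),
  (Rabs (IZR (rel_height H (act g x) (act g y) - rel_height H x y)) <= d)%R.
Proof. intros Hq g x y; rewrite minus_IZR; apply Hq. Qed.

End OrbitHeight.

Theorem proposition2p1
  (X : Type) (le : X -> X -> Prop) (H : Z -> X -> Prop)
  (G : Type) (mul : G -> G -> G) (one : G) (inv : G -> G)
  (act : G -> X -> X) (d : R) :
  half_space_order le H ->
  is_group mul one inv ->
  is_action mul one act ->
  quasi_aut_action H act d ->
  (forall a : X, quasimorphism_defect_le mul (fun g => rel_height H (act g a) a) d) /\
  (forall (a b : X) (g : G),
     (Rabs (IZR (rel_height H (act g a) a - rel_height H (act g b) b)) <= d)%R).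
Proof.
  intros _ _ [_ [Hmul _]] Hq; split.
  - intros a g k.
    rewrite (orbit_height_defect H mul act g k a (Hmul g k a)).
    exact (quasi_aut_rel_height_bound Hq g (act k a) a).
  - intros a b g.
    rewrite rel_height_sub_exchange.
    exact (quasi_aut_rel_height_bound Hq g a b).
Qed.
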